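(* Let $H$, $L$ be as in the context and let $(S,\mathcal T_0)$ be a feasible solution. Then $\omega(H_{\mathcal T_0})=\max\{\omega_j(H_{\mathcal T_0}): j\in[NZ),\ j\bmod Z<LS\}$.
   Context: Notation: $[n)=\{0,1,\dots,n-1\}$. Let $M,N,Z$ be positive integers and let $H$ be a binary $MZ\times NZ$ matrix made of $M\times N$ blocks, each a $Z\times Z$ circulant (row $i$ of a block is the cyclic right shift by $i$ of its row $0$); assume $H$ has no zero row and no two identical rows. For $\mathcal A\subseteq[MZ)$, $H_{\mathcal A}$ is the submatrix of rows indexed by $\mathcal A$. $\omega_j(A)$ is the Hamming weight of column $j$ of $A$ and $\omega(A)=\max_j\omega_j(A)$. For $i\in[MZ)$ and integer $s$, $\pi^s(i)=Z\lfloor i/Z\rfloor+((i+s)\bmod Z)$ and $\pi^s(\mathcal T)=\{\pi^s(x):x\in\mathcal T\}$. Fix an integer $L>1$. A pair $(S,\mathcal T_0)$ ($S$ a positive integer, $\mathcal T_0\subseteq[MZ)$) is a feasible solution if, with $\mathcal T_l=\pi^{lS}(\mathcal T_0)$ for $l\in[L)$, the sets $\mathcal T_0,\dots,\mathcal T_{L-1}$ are pairwise disjoint with union $[MZ)$. *)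

From mathcomp Require Import all_boot all_order all_algebra.
Set Implicit Arguments. Unset Strict Implicit. Unset Printing Implicit Defensive.

(* H is a binary (bool) MZ x NZ matrix made of M x N blocks of size Z x Z,
   each block circulant: row r of a block is the cyclic right shift by r of
   its row 0, i.e. entry (r, c) of a block equals entry (0, (c - r) mod Z). *)
Definition circulant_blocks (M N Z : nat) (H : 'M[bool]_(M * Z, N * Z)) :=
  forall (i i' : 'I_(M * Z)) (j j' : 'I_(N * Z)),
    i %/ Z = i' %/ Z -> j %/ Z = j' %/ Z ->
    (j %% Z + Z - i %% Z) %% Z = (j' %% Z + Z - i' %% Z) %% Z ->
    H i j = H i' j'.

Definition no_zero_row (m n : nat) (H : 'M[bool]_(m, n)) :=
  forall i : 'I_m, exists j : 'I_n, H i j.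

Definition distinct_rows (m n : nat) (H : 'M[bool]_(m, n)) :=
  forall i i' : 'I_m, (forall j : 'I_n, H i j = H i' j) -> i = i'.

Definition pi_shift (Z s i : nat) : nat := Z * (i %/ Z) + (i + s) %% Z.

Definition shiftset {M Z : nat} (S l : nat) (T0 : {set 'I_(M * Z)}) : {set 'I_(M * Z)} :=
  [set i : 'I_(M * Z) | [exists t in T0, pi_shift Z (l * S) t == i :> nat]].

Definition feasible {M Z : nat} (L S : nat) (T0 : {set 'I_(M * Z)}) :=
  0 < S /\
  (forall l l', l < L -> l' < L -> l != l' ->
     [disjoint shiftset S l T0 & shiftset S l' T0]) /\
  (forall i : 'I_(M * Z), exists2 l, l < L & i \in shiftset S l T0).

Definition colw (m n : nat) (H : 'M[bool]_(m, n)) (A : {set 'I_m}) (j : 'I_n) : nat :=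
  #|[set i in A | H i j]|.

Definition omega (m n : nat) (H : 'M[bool]_(m, n)) (A : {set 'I_m}) : nat :=
  \max_(j < n) colw H A j.

From mathcomp Require Import all_boot all_order all_algebra.
From mathcomp Require Import zify.

Set Implicit Arguments.
Unset Strict Implicit.
Unset Printing Implicit Defensive.

(* Write s := L S.  Feasibility forces T0 to be closed under the row shift
   pi^s: the image of T0 under pi^s must lie in some T_l, and l > 0 would make
   T_{L-1} and T_{l-1} meet.  Since shifting a row and a column of a circulant
   block by the same amount preserves the entry, pi^s maps the rows of T0
   meeting column j injectively into those meeting column pi^s(j), so
   omega_j <= omega_{pi^(k s)(j)} for every k.  For a suitable k the residue
   of pi^(k s)(j) mod Z is below s, hence the maximum over all columns is
   attained on such a column. *)

Section PiShift.

Variable Z : nat.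
Hypothesis Z_gt0 : 0 < Z.

Lemma pi_shift_div s i : pi_shift Z s i %/ Z = i %/ Z.
Proof. by rewrite /pi_shift (mulnC Z) divnMDl // (divn_small (ltn_pmod _ Z_gt0)) addn0. Qed.

Lemma pi_shift_mod s i : pi_shift Z s i %% Z = (i + s) %% Z.
Proof. by rewrite /pi_shift (mulnC Z) modnMDl modn_mod. Qed.

Lemma pi_shiftD a b i : pi_shift Z a (pi_shift Z b i) = pi_shift Z (b + a) i.
Proof.
rewrite {1}/pi_shift pi_shift_div /pi_shift -modnDml pi_shift_mod.
by rewrite modnDml addnA.
Qed.

Lemma pi_shift_mulZ k i : pi_shift Z (k * Z) i = i.
Proof. by rewrite /pi_shift (addnC i) modnMDl (mulnC Z) -divn_eq. Qed.

Lemma pi_shift_inj a : injective (pi_shift Z a).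
Proof.
move=> x y /(congr1 (pi_shift Z (a * (Z - 1)))).
by rewrite !pi_shiftD -mulnS subn1 prednK // !pi_shift_mulZ.
Qed.

Lemma pi_shift_lt n s i : i < n * Z -> pi_shift Z s i < n * Z.
Proof.
move=> lt_i; rewrite /pi_shift.
apply: (@leq_trans (Z * (i %/ Z) + Z)); first by rewrite ltn_add2l ltn_pmod.
by rewrite -mulnSr mulnC leq_mul2r ltn_divLR ?lt_i ?orbT.
Qed.

Lemma modn_subDK a b : (a %% Z + Z - b %% Z) + b = a %[mod Z].
Proof.
rewrite -modnDmr subnK; last exact: leq_trans (ltnW (ltn_pmod b Z_gt0)) (leq_addl _ _).
by rewrite modnDr modn_mod.
Qed.

Lemma modn_sub_shift s i j :
  ((j + s) %% Z + Z - (i + s) %% Z) %% Z = (j %% Z + Z - i %% Z) %% Z.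
Proof.
apply/eqP; rewrite -(eqn_modDr (i + s)); apply/eqP.
by rewrite modn_subDK addnA -[RHS]modnDml modn_subDK modnDml.
Qed.

Definition shift_ord n a (i : 'I_(n * Z)) : 'I_(n * Z) :=
  Ordinal (pi_shift_lt a (ltn_ord i)).

Lemma shift_ord_inj n a : injective (@shift_ord n a).
Proof. by move=> x y /(congr1 val) /pi_shift_inj /val_inj. Qed.

Lemma shift_ordD n a b (i : 'I_(n * Z)) :
  shift_ord a (shift_ord b i) = shift_ord (b + a) i.
Proof. by apply: val_inj; rewrite /= pi_shiftD. Qed.

Lemma shift_ord0 n (i : 'I_(n * Z)) : shift_ord 0 i = i.
Proof. by apply: val_inj; rewrite /= -(mul0n Z) pi_shift_mulZ. Qed.

Lemma circulant_blocks_shift M N (H : 'M[bool]_(M * Z, N * Z)) a i j :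
  circulant_blocks H -> H (shift_ord a i) (shift_ord a j) = H i j.
Proof.
move=> circH; apply: circH; rewrite /= ?pi_shift_div //.
by rewrite !pi_shift_mod modn_sub_shift.
Qed.

Lemma shift_closed_mul n (A : {set 'I_(n * Z)}) a :
  {in A, forall t, shift_ord a t \in A} ->
  forall k, {in A, forall t, shift_ord (k * a) t \in A}.
Proof.
move=> closedA; elim=> [|k IHk] t tA; first by rewrite shift_ord0.
by rewrite mulSn addnC -shift_ordD closedA ?IHk.
Qed.

Lemma colw_le_shift M N (H : 'M[bool]_(M * Z, N * Z)) (A : {set 'I_(M * Z)}) a j :
  circulant_blocks H -> {in A, forall t, shift_ord a t \in A} ->
  colw H A j <= colw H A (shift_ord a j).
Proof.
move=> circH closedA; rewrite /colw -(card_imset _ (@shift_ord_inj M a)).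
apply/subset_leq_card/subsetP => _ /imsetP [i + ->]; rewrite !inE => /andP [iA Hij].
by rewrite closedA // circulant_blocks_shift.
Qed.

End PiShift.

Lemma exists_mul_mod_lt Z s j : 0 < Z -> 0 < s -> exists k, (j + k * s) %% Z < s.
Proof.
(* The least k with j mod Z + k s >= Z leaves the residue j mod Z + k s - Z < s. *)
move=> Z_gt0 s_gt0; exists ((Z - 1 - j %% Z) %/ s).+1.
rewrite -modnDml mulSn.
have := ltn_pmod j Z_gt0; have := divn_eq (Z - 1 - j %% Z) s.
have := ltn_pmod (Z - 1 - j %% Z) s_gt0.
set r := j %% Z; set q := (Z - 1 - r) %/ s; set m := (Z - 1 - r) %% s.
move=> lt_m def_q lt_r.
have -> : r + (s + q * s) = (r + (s + q * s) - Z) + Z by lia.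
by rewrite modnDr; apply: leq_ltn_trans (leq_mod _ _) _; lia.
Qed.

Section Feasible.

Variables M Z L S : nat.
Hypothesis Z_gt0 : 0 < Z.
Variable T0 : {set 'I_(M * Z)}.
Hypothesis feasT0 : feasible L S T0.

Lemma shiftsetP l (i : 'I_(M * Z)) :
  reflect (exists2 t, t \in T0 & i = shift_ord Z_gt0 (l * S) t) (i \in shiftset S l T0).
Proof.
rewrite inE; apply: (iffP existsP) => [[t /andP [tT /eqP E]]|[t tT ->]].
  by exists t => //; apply: val_inj.
by exists t; rewrite tT /=.
Qed.

Lemma feasible_shift_closed :
  {in T0, forall t, shift_ord Z_gt0 (L * S) t \in T0}.
Proof.
case: feasT0 => _ [disjT covT] t tT.
have [l lt_lL /shiftsetP [t' t'T]] := covT (shift_ord Z_gt0 (L * S) t).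
case: l lt_lL => [|l] lt_lL E; first by rewrite E shift_ord0.
have E' : shift_ord Z_gt0 ((L - 1) * S) t = shift_ord Z_gt0 (l * S) t'.
  apply: (@shift_ord_inj _ _ _ S).
  by rewrite !shift_ordD -!mulSnr subn1 prednK ?E // (leq_ltn_trans _ lt_lL).
have in_last : shift_ord Z_gt0 ((L - 1) * S) t \in shiftset S (L - 1) T0.
  by apply/shiftsetP; exists t.
have in_l : shift_ord Z_gt0 ((L - 1) * S) t \in shiftset S l T0.
  by apply/shiftsetP; exists t'.
by rewrite (disjointFr (disjT _ _ _ _ _) in_last) in in_l; lia.
Qed.

End Feasible.

Theorem theorem4 (M N Z L S : nat) (H : 'M[bool]_(M * Z, N * Z))
  (T0 : {set 'I_(M * Z)}) :
  0 < M -> 0 < N -> 0 < Z -> 1 < L ->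
  circulant_blocks H -> no_zero_row H -> distinct_rows H ->
  feasible L S T0 ->
  omega H T0 = \max_(j < N * Z | j %% Z < L * S) colw H T0 j.
Proof.
move=> _ _ Z_gt0 lt_1L circH _ _ feasT0.
have s_gt0 : 0 < L * S by rewrite muln_gt0 feasT0.1 (ltn_trans _ lt_1L).
have closedT0 := shift_closed_mul (feasible_shift_closed Z_gt0 feasT0).
apply/eqP; rewrite eqn_leq; apply/andP; split; last first.
  by apply/bigmax_leqP => j _; apply: (leq_bigmax_cond (P := xpredT)).
apply/bigmax_leqP => j _.
have [k lt_jk] := exists_mul_mod_lt j Z_gt0 s_gt0.
apply: leq_trans (colw_le_shift _ circH (closedT0 k)) _.
apply: (leq_bigmax_cond (P := fun j' : 'I_(N * Z) => j' %% Z < L * S)).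
by rewrite /= pi_shift_mod.
Qed.
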